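(* Let $(R,d)$ be a fusion algebra with a finite generating set $X\subseteq I$. Then $\omega_X(R,d)=\max\bigl(1,\lim_{n\to\infty}\sqrt[n]{|S_X(n)|}\bigr)$.
   Context: A fusion algebra $(R,d)$ consists of a set $I$ with distinguished $e$ and involution $\alpha\mapsto\bar\alpha$, a unital ring structure on $R=\mathbb{Z}[I]$ with unit $e$ and $\xi\eta=\sum_\alpha N^\alpha_{\xi,\eta}\alpha$, $N^\alpha_{\xi,\eta}\in\mathbb{Z}_{\ge0}$ finitely many nonzero, the involution extending to a $\mathbb{Z}$-linear antimultiplicative involution, Frobenius reciprocity $N^\alpha_{\xi,\eta}=N^\xi_{\alpha,\bar\eta}=N^\eta_{\bar\xi,\alpha}$, and $\mathbb{Z}$-linear multiplicative $d:R\to\mathbb{R}$ with $d(\bar\alpha)=d(\alpha)\ge1$ on $I$. Write $\alpha\subseteq r$ if $\alpha$ has nonzero coefficient in $r$. $|A|=\sum_{\alpha\in A}d(\alpha)^2$. A finite generating set is a finite $X\subseteq I$ with $\bar X=X$ such that every $\alpha\in I$ satisfies $\alpha\subseteq x_1\cdots x_n$ for some $x_i\in X$. $\ell_X(e)=0$, otherwise $\ell_X(\alpha)$ is the least $n\ge1$ with $\alpha\subseteq x_1\cdots x_n$, $x_i\in X$; $B_X(n)=\{\alpha:\ell_X(\alpha)\le n\}$, $S_X(n)=\{\alpha:\ell_X(\alpha)=n\}$. The exponential growth rate is $\omega_X(R,d)=\lim_{n\to\infty}|B_X(n)|^{1/n}$; both this limit and $\lim_n|S_X(n)|^{1/n}$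 exist (the latter equals $0$ when $I$ is finite). *)

From HB Require Import structures.
From mathcomp Require Import all_boot all_order all_algebra.
From mathcomp Require Import all_classical all_reals all_analysis.
From mathcomp Require Import Rstruct Rstruct_topology.
Set Implicit Arguments. Unset Strict Implicit. Unset Printing Implicit Defensive.
Import Order.TTheory GRing.Theory Num.Theory.
Local Open Scope ring_scope.

(* Conventions.
   - I : eqType is the basis of R = Z[I].
   - N xi eta alpha  is the structure constant N^alpha_{xi,eta}, so that
       xi * eta = sum_alpha (N xi eta alpha) alpha.
   - supp xi eta : seq I is a finite list containing every alpha with
       N xi eta alpha <> 0 (witness of "finitely many nonzero").
   - bar is the involution, e the unit, d the dimension function on I
     (extended Z-linearly to R). *)

Definition is_fusion_algebra (I : eqType) (e : I) (bar : I -> I)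
    (N : I -> I -> I -> nat) (supp : I -> I -> seq I)
    (d : I -> Rdefinitions.R) : Prop :=
  [/\
      (forall xi eta alpha, N xi eta alpha != 0%N -> alpha \in supp xi eta),
      (forall xi alpha, N e xi alpha = (alpha == xi) :> nat /\
                        N xi e alpha = (alpha == xi) :> nat),
      (* associativity: (xi eta) zeta = xi (eta zeta) *)
      (forall xi eta zeta alpha,
          (\sum_(beta <- undup (supp xi eta)) N xi eta beta * N beta zeta alpha =
           \sum_(beta <- undup (supp eta zeta)) N eta zeta beta * N xi beta alpha)%N),
      (* bar is an involution on I whose Z-linear extension is antimultiplicative,
         and Frobenius reciprocity holds *)
      [/\ (forall alpha, bar (bar alpha) = alpha),
          (forall xi eta alpha, N (bar eta) (bar xi) (bar alpha) = N xi eta alpha) &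
          (forall xi eta alpha,
             N xi eta alpha = N alpha (bar eta) xi /\
             N xi eta alpha = N (bar xi) alpha eta)] &
      (* d : Z-linear, multiplicative (and unital), d(bar a) = d(a) >= 1 on I *)
      [/\ d e = 1,
          (forall xi eta, d xi * d eta =
             \sum_(alpha <- undup (supp xi eta)) (N xi eta alpha)%:R * d alpha),
          (forall alpha, d (bar alpha) = d alpha) &
          (forall alpha, 1 <= d alpha)]].

(* A finite list containing the support of the product x_1 ... x_n
   (the empty word is the unit e). *)
Fixpoint wsupp (I : eqType) (e : I) (supp : I -> I -> seq I) (w : seq I)
    : seq I :=
  match w with
  | [::] => [:: e]
  | x :: w' => undup (flatten [seq supp x beta | beta <- wsupp e supp w'])
  end.

(* wcoef w alpha = coefficient of alpha in the product x_1 x_2 ... x_n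
   (computed as x_1 (x_2 (... x_n))), w = [:: x_1; ...; x_n]. *)
Fixpoint wcoef (I : eqType) (e : I) (N : I -> I -> I -> nat)
    (supp : I -> I -> seq I) (w : seq I) (alpha : I) : nat :=
  match w with
  | [::] => (alpha == e : nat)
  | x :: w' => (\sum_(beta <- wsupp e supp w') N x beta alpha * wcoef e N supp w' beta)%N
  end.

Definition is_fin_generating_set (I : eqType) (e : I) (bar : I -> I)
    (N : I -> I -> I -> nat) (supp : I -> I -> seq I) (X : seq I) : Prop :=
  (forall x, x \in X -> bar x \in X) /\
  (forall alpha : I, exists w : seq I,
      [/\ (0 < size w)%N, all (mem X) w & wcoef e N supp w alpha != 0%N]).

Fixpoint words (I : eqType) (X : seq I) (n : nat) : seq (seq I) :=
  match n with
  | 0 => [:: [::]]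
  | n'.+1 => [seq x :: w | x <- X, w <- words X n']
  end.

Definition words_le (I : eqType) (X : seq I) (n : nat) : seq (seq I) :=
  flatten [seq words X m | m <- iota 0 n.+1].

(* alpha \in B_X(n), i.e. l_X(alpha) <= n: alpha occurs in a product of
   at most n generators (the empty product being e, so l_X(e) = 0). *)
Definition inBall (I : eqType) (e : I) (N : I -> I -> I -> nat)
    (supp : I -> I -> seq I) (X : seq I) (n : nat) (alpha : I) : bool :=
  has (fun w => wcoef e N supp w alpha != 0%N) (words_le X n).

Definition inSphere (I : eqType) (e : I) (N : I -> I -> I -> nat)
    (supp : I -> I -> seq I) (X : seq I) (n : nat) (alpha : I) : bool :=
  inBall e N supp X n alpha &&
  (if n is n'.+1 then ~~ inBall e N supp X n' alpha else true).

Definition ball_cand (I : eqType) (e : I) (supp : I -> I -> seq I)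
    (X : seq I) (n : nat) : seq I :=
  undup (flatten [seq wsupp e supp w | w <- words_le X n]).

(* |B_X(n)| = sum_{alpha in B_X(n)} d(alpha)^2 *)
Definition ball_weight (I : eqType) (e : I) (N : I -> I -> I -> nat)
    (supp : I -> I -> seq I) (d : I -> Rdefinitions.R) (X : seq I) (n : nat)
    : Rdefinitions.R :=
  \sum_(alpha <- ball_cand e supp X n | inBall e N supp X n alpha) d alpha ^+ 2.

(* |S_X(n)| = sum_{alpha in S_X(n)} d(alpha)^2 *)
Definition sphere_weight (I : eqType) (e : I) (N : I -> I -> I -> nat)
    (supp : I -> I -> seq I) (d : I -> Rdefinitions.R) (X : seq I) (n : nat)
    : Rdefinitions.R :=
  \sum_(alpha <- ball_cand e supp X n | inSphere e N supp X n alpha) d alpha ^+ 2.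

(* n-th root: x `^ (1/n) (powR; 0 `^ y = 0 for y <> 0) *)
Definition nroot (x : Rdefinitions.R) (n : nat) : Rdefinitions.R :=
  powR x (n%:R)^-1.

(* Cutting a shortest word for a in S_X(m + n) after m letters shows that a is a
   constituent of a product b c with b in S_X(m) and c in S_X(n).  Since
   d(a) <= N^a_{b,c} d(a) and sum_a N^a_{b,c} d(a) = d(b) d(c), the sphere weights
   are submultiplicative: |S_X(m + n)| <= |S_X(m)| |S_X(n)|.  By Fekete's argument
   |S_X(n)|^(1/n) converges to its infimum L, and every t > L gives a bound
   |S_X(n)| <= C t^n.  Finally 1 <= |B_X(n)| <= sum_(k <= n) |S_X(k)|, which for
   t > max(1, L) is at most (n + 1) C t^n, so |B_X(n)|^(1/n) tends to max(1, L). *)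

From Pilot Require Import Defs.
From HB Require Import structures.
From mathcomp Require Import all_boot all_order all_algebra.
From mathcomp Require Import all_classical all_reals all_analysis.
From mathcomp Require Import Rstruct Rstruct_topology.
From mathcomp Require Import lra.
Import Order.TTheory GRing.Theory Num.Theory.
Local Open Scope ring_scope.
Local Open Scope classical_set_scope.

Set Implicit Arguments.
Unset Strict Implicit.
Unset Printing Implicit Defensive.

Local Notation RR := Rdefinitions.R.

Lemma expr1D_ge_quadratic (x : RR) n : 0 < x ->
  n%:R * (n%:R - 1) / 2 * x ^+ 2 <= (1 + x) ^+ n.
Proof.
move=> x0; suff [] : 1 + n%:R * x <= (1 + x) ^+ n /\
    n%:R * (n%:R - 1) / 2 * x ^+ 2 <= (1 + x) ^+ n by [].
elim: n => [|n [IH1 IH2]]; first by rewrite expr0; split; lra.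
rewrite exprSr -natr1.
have n0 : 0 <= n%:R :> RR by rewrite ler0n.
split; nra.
Qed.

Lemma natmul_le_expr1D (K x : RR) : 0 <= K -> 0 < x ->
  \forall n \near \oo, n.+1%:R * K <= (1 + x) ^+ n.
Proof.
move=> K0 x0; set m := 4 * K / x ^+ 2.
have x2 : 0 < x ^+ 2 by rewrite exprn_gt0.
have mx : m * x ^+ 2 = 4 * K by rewrite /m mulfVK // gt_eqF.
exists (Num.trunc m).+2 => // n /= mn.
apply: le_trans _ (expr1D_ge_quadratic n x0); rewrite -natr1.
have m_lt : m < n%:R - 1.
  apply: lt_le_trans (truncnS_gt m) _.
  have : (Num.trunc m).+2%:R <= n%:R :> RR by rewrite ler_nat.
  rewrite -[(Num.trunc m).+2]addn1 natrD; lra.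
have : m * x ^+ 2 <= (n%:R - 1) * x ^+ 2 by rewrite ler_pM2r // ltW.
nra.
Qed.

Lemma nroot_ge0 x n : 0 <= nroot x n.
Proof. exact: powR_ge0. Qed.

Lemma ler_nroot x y n : 0 <= x -> x <= y -> nroot x n <= nroot y n.
Proof. by move=> x0 xy; apply: ge0_ler_powR; rewrite // nnegrE (le_trans x0). Qed.

Lemma nroot_exprK x n : 0 <= x -> (0 < n)%N -> nroot (x ^+ n) n = x.
Proof.
move=> x0 n0; rewrite /nroot -powR_mulrn // -powRrM mulfV ?powRr1 //.
by rewrite pnatr_eq0 -lt0n.
Qed.

Lemma nrootK x n : 0 <= x -> (0 < n)%N -> nroot x n ^+ n = x.
Proof.
move=> x0 n0; rewrite /nroot -powR_mulrn ?powR_ge0 // -powRrM mulVf ?powRr1 //.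
by rewrite pnatr_eq0 -lt0n.
Qed.

Lemma cvg_nroot_squeeze (u : nat -> RR) (M : RR) : 0 <= M ->
  (forall n, 0 <= u n) -> (\forall n \near \oo, M <= nroot (u n) n) ->
  (forall t, M < t -> exists2 C, 0 <= C & forall n, u n <= n.+1%:R * C * t ^+ n) ->
  nroot (u n) n @[n --> \oo] --> M.
Proof.
move=> M0 u0 u_lb u_ub; apply/(@cvgrPdist_le _ RR^o) => eps e0.
have t0 : 0 < M + eps / 2 by lra.
have [C C0 uC] := u_ub (M + eps / 2) ltac:(lra).
have delta_gt0 : 0 < eps / 2 / (M + eps / 2) by rewrite divr_gt0 //; lra.
have scale_t : (1 + eps / 2 / (M + eps / 2)) * (M + eps / 2) = M + eps.
  by rewrite mulrDl mul1r mulfVK ?gt_eqF //; lra.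
near=> n.
have n0 : (0 < n)%N by near: n; exists 1%N.
have : nroot (u n) n <= M + eps.
  rewrite -(@nroot_exprK (M + eps) n _ n0); last lra.
  apply: ler_nroot => //; apply: le_trans (uC n) _.
  rewrite -scale_t exprMn ler_pM2r ?exprn_gt0 //.
  by near: n; apply: natmul_le_expr1D.
have : M <= nroot (u n) n by near: n.
rewrite ler_norml; lra.
Unshelve. all: end_near.
Qed.

Section Fekete.

Variable s : nat -> RR.
Hypothesis s_ge0 : forall n, 0 <= s n.
Hypothesis s_submul : forall m n, s (m + n) <= s m * s n.

(* Writing n = q k + r with r < k, s n <= s r (s k)^q <= (s r / t^r) t^n. *)
Lemma submul_le_geometric k t : (0 < k)%N -> 0 < t -> s k <= t ^+ k ->
  exists2 C, 0 <= C & forall n, s n <= C * t ^+ n.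
Proof.
move=> k0 t0 sk; have tn0 n : 0 < t ^+ n by rewrite exprn_gt0.
have C0 : 0 <= \sum_(r < k) s r / t ^+ r.
  by apply: sumr_ge0 => r _; rewrite divr_ge0 // ltW.
exists (\sum_(r < k) s r / t ^+ r) => //.
elim/ltn_ind => n IH; case: (ltnP n k) => [nk | kn].
  rewrite (bigD1 (Ordinal nk)) //= mulrDl mulfVK ?gt_eqF // lerDl.
  apply: mulr_ge0; last exact: ltW.
  by apply: sumr_ge0 => r _; rewrite divr_ge0 // ltW.
rewrite -(subnKC kn) exprD mulrCA; apply: le_trans (s_submul _ _) _.
apply: ler_pM => //; apply: IH.
by rewrite ltn_subrL k0 (leq_trans k0 kn).
Qed.

Let nroots := [set nroot (s n) n | n in [set n | (0 < n)%N]].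

Definition inf_nroot : RR := inf nroots.

Let nroots_neq0 : nroots !=set0.
Proof. by exists (nroot (s 1) 1), 1%N. Qed.

Lemma inf_nroot_ge0 : 0 <= inf_nroot.
Proof. by apply: lb_le_inf nroots_neq0 _ => _ [n _ <-]; exact: nroot_ge0. Qed.

Lemma inf_nroot_le n : (0 < n)%N -> inf_nroot <= nroot (s n) n.
Proof.
move=> n0; apply: ge_inf; last by exists n.
by exists 0 => _ [m _ <-]; exact: nroot_ge0.
Qed.

Lemma le_geometric_gt_inf_nroot t : inf_nroot < t ->
  exists2 C, 0 <= C & forall n, s n <= C * t ^+ n.
Proof.
move=> Lt; have t0 : 0 < t := le_lt_trans inf_nroot_ge0 Lt.
have [_ [k k0 <-] skt] := inf_lt nroots_neq0 Lt.
apply: (submul_le_geometric k0 t0).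
rewrite -(nrootK (s_ge0 k) k0) lerXn2r ?nnegrE ?nroot_ge0 ?(ltW t0) //.
exact: ltW.
Qed.

Lemma cvg_nroot_submul : nroot (s n) n @[n --> \oo] --> inf_nroot.
Proof.
apply: cvg_nroot_squeeze => //; first exact: inf_nroot_ge0.
  by exists 1%N => // n /= n0; apply: inf_nroot_le.
move=> t Lt; have [C C0 sC] := le_geometric_gt_inf_nroot Lt.
have t0 : 0 <= t by rewrite ltW // (le_lt_trans inf_nroot_ge0 Lt).
exists C => // n; apply: le_trans (sC n) _.
by rewrite -mulrA ler_peMl ?ler1n // mulr_ge0 // exprn_ge0.
Qed.

Lemma cvg_nroot_cumulative (b : nat -> RR) : (forall n, 1 <= b n) ->
  (forall n, s n <= b n) -> (forall n, b n <= \sum_(k < n.+1) s k) ->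
  nroot (b n) n @[n --> \oo] --> Num.max 1 inf_nroot.
Proof.
move=> b_ge1 sb b_le; have b0 n : 0 <= b n := le_trans ler01 (b_ge1 n).
apply: cvg_nroot_squeeze => //; first by rewrite le_max ler01.
  exists 1%N => // n /= n0; rewrite ge_max; apply/andP; split.
    by have := ler_nroot n ler01 (b_ge1 n); rewrite {1}/nroot powR1.
  by apply: le_trans (inf_nroot_le n0) _; apply: ler_nroot.
move=> t; rewrite gt_max => /andP[t1 Lt].
have [C C0 sC] := le_geometric_gt_inf_nroot Lt.
exists C => // n; apply: le_trans (b_le n) _.
have -> : n.+1%:R * C * t ^+ n = \sum_(k < n.+1) C * t ^+ n.
  by rewrite sumr_const card_ord -mulrA mulr_natl.
apply: ler_sum => k _; apply: le_trans (sC k) _.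
by rewrite ler_wpM2l // ler_weXn2l 1?ltW // -ltnS.
Qed.

End Fekete.

Section PositiveSums.

Variables (R : numDomainType) (T : eqType).
Implicit Types (s t : seq T) (P Q : pred T) (F : T -> R).

Lemma ler_psum_mem s P F j : uniq s -> (forall x, 0 <= F x) ->
  j \in s -> P j -> F j <= \sum_(x <- s | P x) F x.
Proof.
move=> us F0 js Pj; rewrite -big_filter (bigD1_seq j) ?filter_uniq ?mem_filter ?Pj //=.
by rewrite lerDl sumr_ge0.
Qed.

Lemma ler_psum_pred s P Q F : (forall x, P x -> Q x) -> (forall x, 0 <= F x) ->
  \sum_(x <- s | P x) F x <= \sum_(x <- s | Q x) F x.
Proof.
move=> PQ F0; rewrite big_mkcond [X in _ <= X]big_mkcond /=.
by apply: ler_sum => x _; case: ifP => [/PQ -> // | _]; case: ifP.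
Qed.

Lemma eq_big_uniq_cond s t P Q F : uniq s -> uniq t ->
  (forall x, (P x && (x \in s)) = (Q x && (x \in t))) ->
  \sum_(x <- s | P x) F x = \sum_(x <- t | Q x) F x.
Proof.
move=> us ut sPtQ; rewrite -[LHS]big_filter -[RHS]big_filter.
apply/perm_big/uniq_perm; rewrite ?filter_uniq // => x.
by rewrite !mem_filter sPtQ.
Qed.

Lemma ler_psum_support s t P F : uniq s -> uniq t -> (forall x, 0 <= F x) ->
  (forall x, F x != 0 -> x \in t) -> \sum_(x <- s | P x) F x <= \sum_(x <- t) F x.
Proof.
move=> us ut F0 Ft.
have -> : \sum_(x <- s | P x) F x = \sum_(x <- s | P x && (x \in t)) F x.
  rewrite big_mkcond [RHS]big_mkcond /=; apply: eq_bigr => x _.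
  case: (P x) => //=; case: ifP => // /negbT xt.
  by apply/eqP; apply: contraNT xt; apply: Ft.
rewrite (@eq_big_uniq_cond s t _ (fun x => P x && (x \in s))) //; last first.
  by move=> x; case: (P x); case: (x \in s); case: (x \in t).
exact: ler_psum_pred.
Qed.

End PositiveSums.

Lemma sumn_neq0P (T : eqType) (s : seq T) (F : T -> nat) :
  reflect (exists2 i, i \in s & F i != 0%N) (\sum_(i <- s) F i != 0%N).
Proof.
by rewrite sum_nat_seq_neq0; apply: (iffP hasP) => -[i si Fi]; exists i.
Qed.

Section Words.

Variables (I : eqType) (X : seq I).

Lemma mem_words n w : (w \in words X n) = (size w == n) && all (mem X) w.
Proof.
elim: n w => [|n IH] [|x w] //=; first by apply/allpairsPdep => -[? [? [_ _ //]]].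
apply/allpairsPdep/idP => [[y [v [yX vw [-> ->]]]] | /andP[sw /andP[xX Xw]]].
  by move: vw; rewrite IH /= eqSS yX.
by exists x, w; rewrite IH -eqSS sw.
Qed.

Lemma mem_words_le n w : (w \in words_le X n) = (size w <= n)%N && all (mem X) w.
Proof.
apply/flatten_mapP/idP => [[m] | /andP[wn Xw]].
  by rewrite mem_iota add0n ltnS mem_words => /andP[_ mn] /andP[/eqP -> ->]; rewrite mn.
by exists (size w); rewrite ?mem_iota ?ltnS ?mem_words ?eqxx.
Qed.

End Words.

Section FusionAlgebra.

Variables (I : eqType) (e : I) (bar : I -> I) (N : I -> I -> I -> nat).
Variables (supp : I -> I -> seq I) (d : I -> RR).
Hypothesis HR : is_fusion_algebra e bar N supp d.

Lemma mem_supp xi eta a : N xi eta a != 0%N -> a \in supp xi eta.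
Proof. by case: HR => + _ _ _ _; apply. Qed.

Lemma N_unitl c a : N e c a = (a == c) :> nat.
Proof. by case: HR => _ + _ _ _ => /(_ c a) []. Qed.

Lemma N_assoc_neq0 x y z a :
  (exists2 b, N x y b != 0 & N b z a != 0)%N <->
  (exists2 c, N y z c != 0 & N x c a != 0)%N.
Proof.
case: HR => _ _ /(_ x y z a) Nassoc _ _.
have sum_neq0 u v (F : I -> I -> nat) :
  (exists2 b, N u v b != 0 & F b a != 0)%N <->
  (\sum_(b <- undup (supp u v)) N u v b * F b a != 0)%N.
  split => [[b uvb Fb] | /sumn_neq0P [b _]].
    by apply/sumn_neq0P; exists b; rewrite ?mem_undup ?mem_supp // muln_eq0 negb_or uvb.
  by rewrite muln_eq0 negb_or => /andP[uvb Fb]; exists b.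
by rewrite (sum_neq0 x y (fun b => N b z)) Nassoc -(sum_neq0 y z (N x)).
Qed.

Definition in_wprod (w : seq I) (a : I) : bool := wcoef e N supp w a != 0%N.

Lemma in_wprod_nil a : in_wprod [::] a = (a == e).
Proof. by rewrite /in_wprod /=; case: (a == e). Qed.

Lemma in_wprod_wsupp w a : in_wprod w a -> a \in wsupp e supp w.
Proof.
elim: w a => [|x w IH] a; first by rewrite in_wprod_nil inE.
rewrite /in_wprod /= => /sumn_neq0P [b bw]; rewrite muln_eq0 negb_or => /andP[xba _].
by rewrite mem_undup; apply/flatten_mapP; exists b; rewrite ?mem_supp.
Qed.

Lemma in_wprod_cons x w a :
  in_wprod (x :: w) a <-> exists2 b, in_wprod w b & N x b a != 0%N.
Proof.
split => [/sumn_neq0P [b _] | [b wb xba]].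
  by rewrite muln_eq0 negb_or => /andP[xba wb]; exists b.
apply/sumn_neq0P; exists b; first exact: in_wprod_wsupp.
by rewrite muln_eq0 negb_or xba.
Qed.

Lemma in_wprod_cat w1 w2 a : in_wprod (w1 ++ w2) a <->
  exists b c, [/\ in_wprod w1 b, in_wprod w2 c & N b c a != 0%N].
Proof.
elim: w1 a => [|x w1 IH] a.
  split => [w2a | [b [c []]]]; first by exists e, a; rewrite in_wprod_nil N_unitl !eqxx.
  by rewrite in_wprod_nil => /eqP -> w2c; rewrite N_unitl; have [->|] := eqVneq a c.
rewrite cat_cons in_wprod_cons; split => [[b' /IH [b [c [w1b w2c bca]]] xb'a] |].
  have [b'' xbb'' b''ca] : exists2 b'', N x b b'' != 0%N & N b'' c a != 0%N.
    by apply/N_assoc_neq0; exists b'.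
  by exists b'', c; split => //; apply/in_wprod_cons; exists b.
case=> b [c [/in_wprod_cons [b' w1b' xb'b] w2c bca]].
have [b'' b'cb'' xb''a] : exists2 b'', N b' c b'' != 0%N & N x b'' a != 0%N.
  by apply/N_assoc_neq0; exists b.
by exists b'' => //; apply/IH; exists b', c.
Qed.

Lemma d_ge0 a : 0 <= d a.
Proof. by case: HR => _ _ _ _ [_ _ _ /(_ a) /(le_trans ler01)]. Qed.

Lemma d_unit : d e = 1.
Proof. by case: HR => _ _ _ _ []. Qed.

Lemma dM xi eta :
  d xi * d eta = \sum_(a <- undup (supp xi eta)) (N xi eta a)%:R * d a.
Proof. by case: HR => _ _ _ _ []. Qed.

Lemma d_le_mul b c a : N b c a != 0%N -> d a <= d b * d c.
Proof.
move=> bca; have Nd_ge0 x : 0 <= (N b c x)%:R * d x by rewrite mulr_ge0 ?d_ge0.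
have mem_a : a \in undup (supp b c) by rewrite mem_undup mem_supp.
rewrite dM; apply: le_trans _ (ler_psum_mem (P := xpredT) (undup_uniq _) Nd_ge0 mem_a isT).
by rewrite ler_peMl ?d_ge0 // ler1n lt0n.
Qed.

Lemma sum_N_d_le_dM (s : seq I) (P : pred I) b c : uniq s ->
  \sum_(a <- s | P a) (N b c a)%:R * d a <= d b * d c.
Proof.
move=> us; rewrite dM; apply: ler_psum_support (undup_uniq _) _ _ => //.
  by move=> a; rewrite mulr_ge0 ?d_ge0.
move=> a; rewrite mem_undup; apply: contraR => abc.
have -> : N b c a = 0%N by apply/eqP; apply: contraNT abc; apply: mem_supp.
by rewrite mul0r.
Qed.

Variable X : seq I.

Local Notation ball n := (inBall e N supp X n).
Local Notation sphere n := (inSphere e N supp X n).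
Local Notation cand n := (ball_cand e supp X n).

Lemma inBallP n a :
  reflect (exists w, [/\ (size w <= n)%N, all (mem X) w & in_wprod w a]) (ball n a).
Proof.
apply: (iffP hasP) => [[w] | [w [wn Xw wa]]].
  by rewrite mem_words_le => /andP[wn Xw] wa; exists w.
by exists w; rewrite ?mem_words_le ?wn.
Qed.

Lemma mem_ball_cand n a : ball n a -> a \in cand n.
Proof.
case/hasP => w wn wa; rewrite mem_undup; apply/flatten_mapP.
by exists w; last exact: in_wprod_wsupp.
Qed.

Lemma mem_sphere_cand n a : sphere n a -> a \in cand n.
Proof. by case/andP => /mem_ball_cand. Qed.

Lemma inBall_le m n a : (m <= n)%N -> ball m a -> ball n a.
Proof.
move=> mn /inBallP [w [wm Xw wa]]; apply/inBallP.
by exists w; rewrite (leq_trans wm mn).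
Qed.

Lemma inBall_unit n : ball n e.
Proof. by apply/inBallP; exists [::]; rewrite in_wprod_nil. Qed.

Lemma inBall_mul m n b c a :
  ball m b -> ball n c -> N b c a != 0%N -> ball (m + n) a.
Proof.
case/inBallP => [w1 [w1m Xw1 w1b]] /inBallP [w2 [w2n Xw2 w2c]] bca.
apply/inBallP; exists (w1 ++ w2); rewrite size_cat leq_add // all_cat Xw1 Xw2.
by split => //; apply/in_wprod_cat; exists b, c.
Qed.

Lemma inSphereP k a :
  reflect (ball k a /\ forall j, (j < k)%N -> ~~ ball j a) (sphere k a).
Proof.
rewrite /inSphere; case: k => [|k]; rewrite ?andbT.
  by apply: (iffP idP) => [|[]//]; split.
apply: (iffP andP) => -[ka nka]; split => //.
  by move=> j; rewrite ltnS => jk; apply: contra (inBall_le jk) nka.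
exact: nka.
Qed.

Lemma inSphere_split m n a : sphere (m + n) a ->
  exists b c, [/\ sphere m b, sphere n c & N b c a != 0%N].
Proof.
case/inSphereP => /inBallP [w [wmn Xw wa]] minimal.
rewrite -(cat_take_drop m w) all_cat in wa Xw; case/andP: Xw => Xw1 Xw2.
have [b [c [wb wc bca]]] := (in_wprod_cat _ _ _).1 wa.
have mb : ball m b by apply/inBallP; exists (take m w); rewrite size_take_min geq_minl.
have nc : ball n c by apply/inBallP; exists (drop m w); rewrite size_drop leq_subLR.
exists b, c; split => //; apply/inSphereP; split => // j jk.
  have jn : (j + n < m + n)%N by rewrite ltn_add2r.
  by apply: contra (minimal _ jn) => jb; apply: inBall_mul jb nc bca.
have mj : (m + j < m + n)%N by rewrite ltn_add2l.
by apply: contra (minimal _ mj) => jc; apply: inBall_mul mb jc bca.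
Qed.

Local Notation ball_weight := (ball_weight e N supp d X).
Local Notation sphere_weight := (sphere_weight e N supp d X).

Let d2_ge0 a : 0 <= d a ^+ 2.
Proof. by rewrite exprn_ge0 ?d_ge0. Qed.

Lemma ball_weight_ge1 n : 1 <= ball_weight n.
Proof.
rewrite -(expr1n _ 2) -d_unit.
exact: ler_psum_mem (undup_uniq _) d2_ge0 (mem_ball_cand (inBall_unit n)) (inBall_unit n).
Qed.

Lemma sphere_le_ball_weight n : sphere_weight n <= ball_weight n.
Proof. by apply: ler_psum_pred d2_ge0 => a /andP[]. Qed.

Lemma ball_weightE m n : (m <= n)%N ->
  ball_weight m = \sum_(a <- cand n | ball m a) d a ^+ 2.
Proof.
move=> mn; apply: eq_big_uniq_cond; rewrite ?undup_uniq // => a.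
by case: (boolP (ball m a)) => //= ma; rewrite !mem_ball_cand // (inBall_le mn).
Qed.

Lemma ball_weight_le_sum n : ball_weight n <= \sum_(k < n.+1) sphere_weight k.
Proof.
elim: n => [|n IH].
  by rewrite big_ord1; apply: ler_psum_pred d2_ge0 => a; rewrite /inSphere andbT.
rewrite big_ord_recr /=; apply: le_trans _ (lerD IH (lexx _)).
rewrite (ball_weightE (leqnSn n)) /Defs.ball_weight /Defs.sphere_weight.
rewrite big_mkcond [X in _ <= X + _]big_mkcond [X in _ <= _ + X]big_mkcond -big_split.
apply: ler_sum => a _; rewrite /inSphere.
by case: (ball n.+1 a); case: (ball n a); rewrite /= ?addr0 ?add0r ?lerDl.
Qed.

Lemma sq_d_le_sum_sphere m n a : sphere (m + n) a ->
  d a ^+ 2 <= \sum_(b <- cand m | sphere m b) \sum_(c <- cand n | sphere n c)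
                (N b c a)%:R * d a * (d b * d c).
Proof.
have T_ge0 b c : 0 <= (N b c a)%:R * d a * (d b * d c) by rewrite !mulr_ge0 ?d_ge0.
case/inSphere_split => b [c [mb nc bca]].
apply: le_trans _ (ler_psum_mem (undup_uniq _) _ (mem_sphere_cand mb) mb); last first.
  by move=> b'; apply: sumr_ge0 => c' _; apply: T_ge0.
apply: le_trans _ (ler_psum_mem (undup_uniq _) (T_ge0 b) (mem_sphere_cand nc) nc).
have d2_le : d a * d a <= d a * (d b * d c) by rewrite ler_wpM2l ?d_ge0 ?d_le_mul.
rewrite expr2 -mulrA; apply: le_trans d2_le _.
by rewrite ler_peMl ?mulr_ge0 ?d_ge0 // ler1n lt0n.
Qed.

Lemma sphere_weight_submul m n :
  sphere_weight (m + n) <= sphere_weight m * sphere_weight n.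
Proof.
apply: le_trans (ler_sum _ (fun a => @sq_d_le_sum_sphere m n a)) _.
rewrite exchange_big mulr_suml; apply: ler_sum => b _.
rewrite exchange_big mulr_sumr; apply: ler_sum => c _.
rewrite -mulr_suml -exprMn expr2 ler_wpM2r ?mulr_ge0 ?d_ge0 //.
exact: sum_N_d_le_dM (undup_uniq _).
Qed.

End FusionAlgebra.

Unset Implicit Arguments.

Theorem lemma3p12 (I : eqType) (e : I) (bar : I -> I)
    (N : I -> I -> I -> nat) (supp : I -> I -> seq I)
    (d : I -> Rdefinitions.R)
    (HR : is_fusion_algebra e bar N supp d)
    (X : seq I) (HX : is_fin_generating_set e bar N supp X) :
  exists L : Rdefinitions.R,
    (fun n : nat => nroot (sphere_weight e N supp d X n) n) @ \oo --> L /\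
    (fun n : nat => nroot (ball_weight e N supp d X n) n) @ \oo --> Num.max 1 L.
Proof.
have S_ge0 n : 0 <= sphere_weight e N supp d X n.
  by apply: sumr_ge0 => a _; rewrite exprn_ge0 ?(d_ge0 HR).
have S_submul := sphere_weight_submul HR X.
exists (inf_nroot (sphere_weight e N supp d X)); split.
  exact: cvg_nroot_submul S_ge0 S_submul.
apply: (cvg_nroot_cumulative S_ge0 S_submul).
- exact: (ball_weight_ge1 HR X).
- exact: (sphere_le_ball_weight HR X).
- exact: (ball_weight_le_sum HR X).
Qed.
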